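(* Let $p\ge2$, $c\in\mathbb R^d$ and $\lambda_1,\dots,\lambda_d>0$. Then the function $H(y)=-\sum_{i=1}^dy_i^{1/p}|c_i|-\sqrt{\sum_{i=1}^d\lambda_i^{-1}y_i^{2/p}}$ is convex on $\mathbb R_+^d$. *)

From mathcomp Require Import all_boot all_order all_algebra.
From mathcomp Require Import all_classical all_reals all_analysis.
Set Implicit Arguments. Unset Strict Implicit. Unset Printing Implicit Defensive.
Import Order.TTheory GRing.Theory Num.Theory.
Local Open Scope ring_scope.

Definition nonneg_orthant (R : realType) (d : nat) (y : 'I_d -> R) : Prop :=
  forall i, 0 <= y i.

Definition convex_on (R : realType) (d : nat) (D : ('I_d -> R) -> Prop)
  (f : ('I_d -> R) -> R) : Prop :=
  forall (y z : 'I_d -> R) (t : R), D y -> D z -> 0 <= t -> t <= 1 ->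
    f (fun i => t * y i + (1 - t) * z i) <= t * f y + (1 - t) * f z.

Definition Hfun (R : realType) (d : nat) (p : R) (c lam : 'I_d -> R)
  (y : 'I_d -> R) : R :=
  - (\sum_(i < d) (y i `^ (1 / p)) * `|c i|)
  - Num.sqrt (\sum_(i < d) (lam i)^-1 * (y i `^ (2 / p))).

(** For [0 < r <= 1] (here [r = 1/p] or [2/p], as [p >= 2]) the map [u ^ r] is
    concave on the half-line, being the inverse of the convex increasing map [u ^ (1/r)].
    Hence both sums in [H] are concave on the orthant, and so is the square root of
    the second one, the square root being concave and nondecreasing.  [H] is minus
    the sum of two concave functions. *)
From mathcomp Require Import all_boot all_order all_algebra.
From mathcomp Require Import all_classical all_reals all_analysis.
From mathcomp Require Import lra.
Set Implicit Arguments. Unset Strict Implicit. Unset Printing Implicit Defensive.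
Import Order.TTheory GRing.Theory Num.Theory.
Local Open Scope ring_scope.

Definition concave_on (R : realType) (d : nat) (D : ('I_d -> R) -> Prop)
  (f : ('I_d -> R) -> R) : Prop :=
  forall (y z : 'I_d -> R) (t : R), D y -> D z -> 0 <= t -> t <= 1 ->
    t * f y + (1 - t) * f z <= f (fun i => t * y i + (1 - t) * z i).

Section ConcaveScalar.
Variable R : realType.

Lemma concave_powR (r x w t : R) : 0 < r -> r <= 1 ->
  0 <= x -> 0 <= w -> 0 <= t -> t <= 1 ->
  t * x `^ r + (1 - t) * w `^ r <= (t * x + (1 - t) * w) `^ r.
Proof.
move=> r_gt0 r_le1 x_ge0 w_ge0 t_ge0 t_le1.
have subt_ge0 : 0 <= 1 - t by rewrite subr_ge0.
set m := t * x `^ r + (1 - t) * w `^ r.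
have m_ge0 : 0 <= m by rewrite addr_ge0 // mulr_ge0 // powR_ge0.
have powRK u : 0 <= u -> (u `^ r) `^ r^-1 = u.
  by move=> u_ge0; rewrite -powRrM mulfV ?gt_eqF // powRr1.
have root_m_le : m `^ r^-1 <= t * x + (1 - t) * w.
  have := @convex_powR R _ (eqbRL (invf_ge1 r_gt0) r_le1) (Itv01 t_ge0 t_le1)
    (x `^ r) (w `^ r).
  rewrite !inE /= !in_itv /= !powR_ge0 => /(_ isT isT).
  by rewrite !convRE /= !powRK.
have -> : m = (m `^ r^-1) `^ r by rewrite -powRrM mulVf ?gt_eqF // powRr1.
apply: ge0_ler_powR root_m_le; rewrite ?ltW // nnegrE ?powR_ge0 //.
by rewrite addr_ge0 // mulr_ge0.
Qed.

Lemma concave_sqrtr (a b t : R) : 0 <= a -> 0 <= b -> 0 <= t -> t <= 1 ->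
  t * Num.sqrt a + (1 - t) * Num.sqrt b <= Num.sqrt (t * a + (1 - t) * b).
Proof.
move=> a_ge0 b_ge0 t_ge0 t_le1.
have m_ge0 : 0 <= t * a + (1 - t) * b by rewrite addr_ge0 // mulr_ge0 // subr_ge0.
rewrite -!powR12_sqrt //; apply: concave_powR => //.
by rewrite invf_le1 // ler1n.
Qed.

End ConcaveScalar.

Section ConcaveOrthant.
Variables (R : realType) (d : nat).

Lemma concave_on_sum_powR (w : 'I_d -> R) (r : R) :
  (forall i, 0 <= w i) -> 0 < r -> r <= 1 ->
  concave_on (@nonneg_orthant R d) (fun y => \sum_(i < d) w i * y i `^ r).
Proof.
move=> w_ge0 r_gt0 r_le1 y z t y_ge0 z_ge0 t_ge0 t_le1.
rewrite !mulr_sumr -big_split /=; apply: ler_sum => i _.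
rewrite mulrCA [(1 - t) * _]mulrCA -mulrDr ler_wpM2l //.
exact: concave_powR.
Qed.

Lemma concave_on_sqrt (D : ('I_d -> R) -> Prop) (f : ('I_d -> R) -> R) :
  (forall y, D y -> 0 <= f y) -> concave_on D f ->
  concave_on D (fun y => Num.sqrt (f y)).
Proof.
move=> f_ge0 f_concave y z t Dy Dz t_ge0 t_le1.
have f_comb := f_concave y z t Dy Dz t_ge0 t_le1.
apply: le_trans (concave_sqrtr (f_ge0 y Dy) (f_ge0 z Dz) t_ge0 t_le1) _.
rewrite ler_sqrt //; apply: le_trans f_comb.
by rewrite addr_ge0 // mulr_ge0 ?f_ge0 // subr_ge0.
Qed.

Lemma convex_on_oppD (D : ('I_d -> R) -> Prop) (f g : ('I_d -> R) -> R) :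
  concave_on D f -> concave_on D g -> convex_on D (fun y => - f y - g y).
Proof.
move=> f_concave g_concave y z t Dy Dz t_ge0 t_le1.
have := f_concave y z t Dy Dz t_ge0 t_le1.
have := g_concave y z t Dy Dz t_ge0 t_le1.
lra.
Qed.

End ConcaveOrthant.

Theorem proposition9 (R : realType) (d : nat) (p : R) (c lam : 'I_d -> R)
  (hp : 2 <= p) (hlam : forall i, 0 < lam i) :
  convex_on (@nonneg_orthant R d) (Hfun p c lam).
Proof.
have p_gt0 : 0 < p by apply: lt_le_trans hp.
have r1_gt0 : 0 < 1 / p by rewrite divr_gt0.
have r1_le1 : 1 / p <= 1 by rewrite ler_pdivrMr // mul1r (le_trans _ hp) // ler1n.
have r2_gt0 : 0 < 2 / p by rewrite divr_gt0.
have r2_le1 : 2 / p <= 1 by rewrite ler_pdivrMr // mul1r.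
have -> : Hfun p c lam = fun y => - (\sum_(i < d) `|c i| * y i `^ (1 / p))
    - Num.sqrt (\sum_(i < d) (lam i)^-1 * y i `^ (2 / p)).
  by apply/funext => y; rewrite /Hfun; under eq_bigr do rewrite mulrC.
apply: convex_on_oppD; first exact: concave_on_sum_powR.
apply: concave_on_sqrt; last by apply: concave_on_sum_powR => // i; rewrite invr_ge0 ltW.
move=> y _; apply: sumr_ge0 => i _.
by rewrite mulr_ge0 ?powR_ge0 // invr_ge0 ltW.
Qed.
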